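(* For every positive integer $n$, \[ Z(n)=1+\frac{\left(1+(-1)^{n-1}\right)(n-1)!}{n+1}, \] where $Z(n)=\sum_{k=0}^{n-1}\frac{1+(-1)^{k}k!(n-k-1)!}{n}$. In particular $Z(2m)=1$ and $Z(2m-1)=1+\frac{(2m-2)!}{m}$ for all positive integers $m$, and $Z(n)\in\mathbb{N}$ for all $n\in\mathbb{N}$. *)

From mathcomp Require Import all_boot all_order all_algebra.
Set Implicit Arguments. Unset Strict Implicit. Unset Printing Implicit Defensive.
Import Order.TTheory GRing.Theory Num.Theory.
Local Open Scope ring_scope.

Definition Z (n : nat) : rat :=
  \sum_(k < n) (1 + (-1) ^+ k * (k`!)%:R * ((n - k - 1)`!)%:R) / n%:R.

(* Since (N+2) k!(N-k)! = k!(N+1-k)! + (k+1)!(N-k)!, the alternating sum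
   S = sum_(k<=N) (-1)^k k!(N-k)! telescopes: (N+2) S = (1 + (-1)^N) (N+1)!.
   Hence Z(N+1) = 1 + S/(N+1) has the stated closed form; it is 1 for even
   arguments and 1 + (2m-2)!/m for n = 2m-1, an integer because m <= 2m-2
   divides (2m-2)! once m >= 2. *)
From mathcomp Require Import all_boot all_order all_algebra.
From mathcomp Require Import ring zify.
Import Order.TTheory GRing.Theory Num.Theory.
Local Open Scope ring_scope.

Lemma sum_alternating_consecutive (R : pzRingType) (a : nat -> R) (n : nat) :
  \sum_(k < n) (-1) ^+ k * (a k + a k.+1) = a 0%N - (-1) ^+ n * a n.
Proof.
elim: n => [|n IHn]; first by rewrite big_ord0 expr0 mul1r subrr.
by rewrite big_ord_recr /= IHn mulrDr addrA subrK exprSr mulrN1 mulNr opprK.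
Qed.

Lemma fact_mul_fact_split (N k : nat) : (k <= N)%N ->
  ((N + 2) * (k`! * (N - k)`!) = k`! * (N.+1 - k)`! + k.+1`! * (N - k)`!)%N.
Proof.
move=> le_kN; have -> : (N.+1 - k = (N - k).+1)%N by lia.
have -> : (N + 2 = (N - k).+1 + k.+1)%N by lia.
rewrite !factS; ring.
Qed.

Lemma sum_alternating_fact_mul_fact (R : pzRingType) (N : nat) :
  (N + 2)%:R * \sum_(k < N.+1) (-1) ^+ k * (k`! * (N - k)`!)%:R
  = (1 + (-1) ^+ N) * (N.+1)`!%:R :> R.
Proof.
pose a k := (k`! * (N.+1 - k)`!)%:R : R.
rewrite mulr_sumr.
under eq_bigr => k _.
  rewrite mulrA -commr_nat -mulrA -natrM fact_mul_fact_split; last by rewrite -ltnS.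
  rewrite natrD -/(a k) -(subSS k N) -/(a k.+1).
over.
rewrite sum_alternating_consecutive /a subn0 subnn fact0 muln1 mul1n exprS.
by rewrite mulN1r mulNr opprK mulrDl mul1r.
Qed.

Lemma Z_closed_form (n : nat) : (0 < n)%N ->
  Z n = 1 + (1 + (-1) ^+ (n - 1)) * ((n - 1)`!)%:R / (n + 1)%:R.
Proof.
case: n => [//|N] _; rewrite subSS subn0 addn1.
have NS_neq0 : N.+1%:R != 0 :> rat by rewrite pnatr_eq0.
have -> : Z N.+1 = 1 + (\sum_(k < N.+1) (-1) ^+ k * (k`! * (N - k)`!)%:R) / N.+1%:R.
  rewrite /Z -mulr_suml big_split /= sumr_const card_ord mulrDl divff //.
  congr (1 + _ / _); apply: eq_bigr => k _.
  by rewrite subnAC subSS subn0 natrM mulrA.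
have N2_neq0 : (N + 2)%:R != 0 :> rat by rewrite pnatr_eq0 addn2.
rewrite -[X in X / _](mulKf N2_neq0) sum_alternating_fact_mul_fact.
rewrite factS natrM -addn2; field.
by rewrite nat1r -(natrD _ 2) !pnatr_eq0.
Qed.

Lemma Z_even (m : nat) : (0 < m)%N -> Z (2 * m) = 1.
Proof.
move=> m_gt0; rewrite Z_closed_form ?muln_gt0 //.
have -> : (2 * m - 1 = (2 * (m - 1)).+1)%N by lia.
by rewrite -signr_odd oddS oddM /= expr1 subrr !mul0r addr0.
Qed.

Lemma Z_odd (m : nat) : (0 < m)%N -> Z (2 * m - 1) = 1 + ((2 * m - 2)`!)%:R / m%:R.
Proof.
move=> m_gt0; rewrite Z_closed_form; last by lia.
have -> : (2 * m - 1 - 1 = 2 * (m - 1))%N by lia.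
have -> : (2 * m - 1 + 1 = 2 * m)%N by lia.
have -> : (2 * m - 2 = 2 * (m - 1))%N by lia.
have m_neq0 : m%:R != 0 :> rat by rewrite pnatr_eq0 -lt0n.
rewrite -signr_odd oddM /= expr0 natrM; field.
by rewrite m_neq0.
Qed.

Lemma dvdn_fact_double_pred (m : nat) : (0 < m)%N -> (m %| (2 * m - 2)`!)%N.
Proof.
move=> m_gt0; have [m_le1 | m_gt1] := leqP m 1.
  by have -> : m = 1%N by lia.
by apply: dvdn_fact; lia.
Qed.

Lemma Z_nat (n : nat) : (0 < n)%N -> exists k : nat, Z n = k%:R.
Proof.
move=> n_gt0.
have [m m_gt0 [-> | ->]] : exists2 m, (0 < m)%N & (n = 2 * m \/ n = 2 * m - 1)%N.
- by exists (n.+1 %/ 2)%N; lia.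
- by exists 1%N; rewrite Z_even.
exists (1 + (2 * m - 2)`! %/ m)%N.
by rewrite Z_odd // natrD natf_div ?dvdn_fact_double_pred.
Qed.

Theorem mainTheorem4 :
  (forall n : nat, (0 < n)%N ->
     Z n = 1 + (1 + (-1) ^+ (n - 1)) * ((n - 1)`!)%:R / (n + 1)%:R)
  /\ (forall m : nat, (0 < m)%N ->
        Z (2 * m) = 1 /\ Z (2 * m - 1) = 1 + ((2 * m - 2)`!)%:R / m%:R)
  /\ (forall n : nat, (0 < n)%N -> exists k : nat, Z n = k%:R).
Proof.
split; first exact: Z_closed_form.
split; last exact: Z_nat.
by move=> m m_gt0; rewrite Z_even // Z_odd.
Qed.
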